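(* Let $u\in\varphi^{-1}(0)$ and let $\alpha^1,\alpha^2\in\Delta_k$ be two solutions of $(\mathrm{P}_u)$ with $\alpha^1\neq\alpha^2$. Then $\omega_u(\alpha)=0$ for all $\alpha\in\mathrm{span}\{\alpha^1,\alpha^2\}$, and $\mathrm{span}\{\alpha^1,\alpha^2\}\cap\ker(DJ^r(u)^\top)$ contains a nonzero vector.
   Context: $J^r:\mathbb{R}^n\to\mathbb{R}^k$ is continuously differentiable with Jacobian $DJ^r(u)\in\mathbb{R}^{k\times n}$ (so $\ker(DJ^r(u)^\top)\subseteq\mathbb{R}^k$), and $\epsilon\in[0,\infty)^k$. $\Delta_k:=\{\alpha\in[0,\infty)^k:\sum_{i=1}^k\alpha_i=1\}$. For $u\in\mathbb{R}^n$ and $\alpha\in\mathbb{R}^k$, $\omega_u(\alpha):=\alpha^\top\big(DJ^r(u)DJ^r(u)^\top-\epsilon\epsilon^\top\big)\alpha=\|DJ^r(u)^\top\alpha\|_2^2-(\alpha^\top\epsilon)^2$; $(\mathrm{P}_u)$ denotes the problem $\min_{\alpha\in\Delta_k}\omega_u(\alpha)$, a solution being a minimizer; $\varphi(u):=\min_{\alpha\in\Delta_k}\omega_u(\alpha)$. *)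

(* the statement is purely algebraic at a fixed point u,
   stated over an arbitrary real field R (covers the reals). *)
From HB Require Import structures.
From mathcomp Require Import all_boot all_order all_algebra.
Set Implicit Arguments. Unset Strict Implicit. Unset Printing Implicit Defensive.
Import Order.TTheory GRing.Theory Num.Theory.
Local Open Scope ring_scope.

Definition simplex (R : realFieldType) (k : nat) : pred 'cV[R]_k :=
  [pred a : 'cV[R]_k | [forall i : 'I_k, 0 <= a i ord0] && (\sum_(i < k) a i ord0 == 1)].

Definition omega (R : realFieldType) (k n : nat)
    (DJ : 'cV[R]_n -> 'M[R]_(k, n)) (eps : 'cV[R]_k) (u : 'cV[R]_n)
    (a : 'cV[R]_k) : R :=
  (a^T *m (DJ u *m (DJ u)^T - eps *m eps^T) *m a) ord0 ord0.

Definition is_solution (R : realFieldType) (k n : nat)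
    (DJ : 'cV[R]_n -> 'M[R]_(k, n)) (eps : 'cV[R]_k) (u : 'cV[R]_n)
    (a : 'cV[R]_k) : Prop :=
  a \in @simplex R k /\
  forall b, b \in @simplex R k -> omega DJ eps u a <= omega DJ eps u b.

Definition varphi_is (R : realFieldType) (k n : nat)
    (DJ : 'cV[R]_n -> 'M[R]_(k, n)) (eps : 'cV[R]_k) (u : 'cV[R]_n)
    (v : R) : Prop :=
  (exists2 a, a \in @simplex R k & omega DJ eps u a = v) /\
  forall b, b \in @simplex R k -> v <= omega DJ eps u b.

From HB Require Import structures.
From mathcomp Require Import all_boot all_order all_algebra.
From mathcomp Require Import ring lra.
Set Implicit Arguments. Unset Strict Implicit. Unset Printing Implicit Defensive.
Import Order.TTheory GRing.Theory Num.Theory.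
Local Open Scope ring_scope.

(* Write M := DJ(u) and e := eps.  omega_u is the quadratic form of the
   symmetric bilinear form  B(a,b) = <M^T a, M^T b> - (e.a)(e.b),  so on
   span{a1,a2} it is determined by B(a1,a1), B(a2,a2) and the cross term
   B(a1,a2).  When min_simplex omega_u = 0 and a1, a2 are minimizers, the
   diagonal terms vanish, and the midpoint of a1, a2 (again in the simplex)
   gives B(a1,a2) >= 0.  Testing B on v = (e.a2) a1 - (e.a1) a2, which is
   e-orthogonal and hence has B(v,v) = |M^T v|^2 >= 0, forces B(a1,a2) = 0
   (the degenerate cases e.ai = 0 put ai in the radical of B).  So omega_u
   vanishes on the span.  Finally a nontrivial combination annihilated by
   e is nonzero because distinct points of the simplex are linearly
   independent, and it satisfies |M^T v|^2 = omega_u(v) = 0.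
   The file develops: dot products of column vectors; the form B and its
   algebra; facts about the simplex; then the theorem. *)

Section DotProduct.
Variables (R : realFieldType) (m : nat).

Lemma dotC (x y : 'cV[R]_m) : (x^T *m y) ord0 ord0 = (y^T *m x) ord0 ord0.
Proof.
transitivity ((x^T *m y)^T ord0 ord0); first by rewrite [RHS]mxE.
by rewrite trmx_mul trmxK.
Qed.

Lemma dot_self_sum (x : 'cV[R]_m) : (x^T *m x) ord0 ord0 = \sum_i x i ord0 ^+ 2.
Proof. by rewrite mxE; apply: eq_bigr => i _; rewrite mxE expr2. Qed.

Lemma dot_self_ge0 (x : 'cV[R]_m) : 0 <= (x^T *m x) ord0 ord0.
Proof. by rewrite dot_self_sum sumr_ge0 // => i _; rewrite sqr_ge0. Qed.

Lemma dot_self_eq0 (x : 'cV[R]_m) : (x^T *m x) ord0 ord0 = 0 -> x = 0.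
Proof.
rewrite dot_self_sum => /psumr_eq0P x0; apply/matrixP => i j.
rewrite ord1 mxE; apply/eqP; rewrite -sqrf_eq0; apply/eqP.
by apply: x0 => // l _; rewrite sqr_ge0.
Qed.

End DotProduct.

Section PolarForm.
Variables (R : realFieldType) (k n : nat) (M : 'M[R]_(k, n)) (e : 'cV[R]_k).

Definition bform (a b : 'cV[R]_k) : R :=
  (a^T *m (M *m M^T - e *m e^T) *m b) ord0 ord0.

Definition epair (a : 'cV[R]_k) : R := (e^T *m a) ord0 ord0.

Lemma epairD c1 c2 (a1 a2 : 'cV[R]_k) :
  epair (c1 *: a1 + c2 *: a2) = c1 * epair a1 + c2 * epair a2.
Proof. by rewrite /epair mulmxDr -!scalemxAr !mxE. Qed.

Lemma bformDr c1 c2 (a b1 b2 : 'cV[R]_k) :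
  bform a (c1 *: b1 + c2 *: b2) = c1 * bform a b1 + c2 * bform a b2.
Proof.
rewrite /bform; set G := (_ - _).
by rewrite mulmxDr -!scalemxAr !mxE.
Qed.

Lemma bformC (a b : 'cV[R]_k) : bform a b = bform b a.
Proof.
have symG : (M *m M^T - e *m e^T)^T = M *m M^T - e *m e^T.
  by rewrite linearB /= !trmx_mul !trmxK.
rewrite /bform; set G := (_ - _) in symG *.
by rewrite -mulmxA dotC trmx_mul symG.
Qed.

Lemma bformE (a b : 'cV[R]_k) :
  bform a b = ((M^T *m a)^T *m (M^T *m b)) ord0 ord0 - epair a * epair b.
Proof.
rewrite /bform /epair mulmxBr mulmxBl mxE trmx_mul trmxK !mulmxA.
by rewrite [X in _ + X = _]mxE -(mulmxA (a^T *m e)) [X in _ - X = _]mxE big_ord1 dotC.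
Qed.

Lemma bform_span c1 c2 (a1 a2 : 'cV[R]_k) :
  bform (c1 *: a1 + c2 *: a2) (c1 *: a1 + c2 *: a2) =
  c1 ^+ 2 * bform a1 a1 + 2 * c1 * c2 * bform a1 a2 + c2 ^+ 2 * bform a2 a2.
Proof.
rewrite !bformDr ![bform (_ + _) _]bformC !bformDr [bform a2 a1]bformC.
ring.
Qed.

Lemma bform_orth (a : 'cV[R]_k) :
  epair a = 0 -> bform a a = ((M^T *m a)^T *m (M^T *m a)) ord0 ord0.
Proof. by rewrite bformE => ->; rewrite mul0r subr0. Qed.

Lemma bform_orth_ge0 (a : 'cV[R]_k) : epair a = 0 -> 0 <= bform a a.
Proof. by move/bform_orth->; apply: dot_self_ge0. Qed.

Lemma bform_orth_eq0 (a : 'cV[R]_k) :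
  epair a = 0 -> bform a a = 0 -> M^T *m a = 0.
Proof. by move/bform_orth->; apply: dot_self_eq0. Qed.

Lemma bform_ker (a b : 'cV[R]_k) : M^T *m a = 0 -> epair a = 0 -> bform a b = 0.
Proof. by rewrite bformE => -> ->; rewrite linear0 mul0mx mxE mul0r subr0. Qed.

(* The test vector is
   (e.a2) a1 - (e.a1) a2, on which B equals -2 (e.a1)(e.a2) B(a1,a2). *)
Lemma cross_term_eq0 (a1 a2 : 'cV[R]_k) :
  bform a1 a1 = 0 -> bform a2 a2 = 0 -> 0 <= bform a1 a2 ->
  0 <= epair a1 -> 0 <= epair a2 -> bform a1 a2 = 0.
Proof.
move=> q1 q2 q12 s1 s2.
have isotropic_ker (a b : 'cV[R]_k) : bform a a = 0 -> epair a = 0 -> bform a b = 0.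
  by move=> qa ea; apply: bform_ker (bform_orth_eq0 ea qa) ea.
have [e1|e1] := eqVneq (epair a1) 0; first exact: isotropic_ker.
have [e2|e2] := eqVneq (epair a2) 0; first by rewrite bformC isotropic_ker.
have v_orth : epair (epair a2 *: a1 + (- epair a1) *: a2) = 0.
  by rewrite epairD; ring.
have := bform_orth_ge0 v_orth; rewrite bform_span q1 q2 !mulr0 addr0 add0r => v_ge0.
have s12_gt0 : 0 < 2 * epair a1 * epair a2.
  by rewrite !mulr_gt0 // lt_def ?e1 ?e2.
apply/eqP; rewrite eq_le q12 andbT -(pmulr_rle0 _ s12_gt0).
lra.
Qed.

End PolarForm.

Section Simplex.
Variables (R : realFieldType) (k : nat).

Lemma simplex_sum_comb (c1 c2 : R) (a1 a2 : 'cV[R]_k) :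
  a1 \in @simplex R k -> a2 \in @simplex R k ->
  \sum_i (c1 *: a1 + c2 *: a2) i ord0 = c1 + c2.
Proof.
move=> /andP[_ /eqP sum1] /andP[_ /eqP sum2].
rewrite (eq_bigr (fun i => c1 * a1 i ord0 + c2 * a2 i ord0)) => [|i _]; last first.
  by rewrite !mxE.
by rewrite big_split -!mulr_sumr sum1 sum2 !mulr1.
Qed.

Lemma simplex_convex (t : R) (a1 a2 : 'cV[R]_k) :
  0 <= t <= 1 -> a1 \in @simplex R k -> a2 \in @simplex R k ->
  t *: a1 + (1 - t) *: a2 \in @simplex R k.
Proof.
move=> /andP[t_ge0 t_le1] a1S a2S; apply/andP; split; last first.
  by rewrite simplex_sum_comb // addrC subrK.
move: a1S a2S => /andP[/forallP a1_ge0 _] /andP[/forallP a2_ge0 _].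
by apply/forallP => i; rewrite !mxE addr_ge0 // mulr_ge0 // subr_ge0.
Qed.

Lemma simplex_indep (c1 c2 : R) (a1 a2 : 'cV[R]_k) :
  a1 \in @simplex R k -> a2 \in @simplex R k -> a1 != a2 ->
  (c1 != 0) || (c2 != 0) -> c1 *: a1 + c2 *: a2 != 0.
Proof.
move=> a1S a2S a12 c_nz; apply: contraNneq a12 => comb0.
have sum0 : c1 + c2 = 0.
  by rewrite -(simplex_sum_comb c1 c2 a1S a2S) comb0 big1 // => i _; rewrite mxE.
have c2E : c2 = - c1 by apply/eqP; rewrite -addr_eq0 addrC sum0.
have c1_nz : c1 != 0 by move: c_nz; rewrite c2E oppr_eq0 orbb.
move/eqP: comb0; rewrite c2E scaleNr subr_eq0.
by move=> /eqP/(scalerI c1_nz) ->.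
Qed.

Lemma epair_simplex_ge0 (e a : 'cV[R]_k) :
  (forall i, 0 <= e i ord0) -> a \in @simplex R k -> 0 <= epair e a.
Proof.
move=> e_ge0 /andP[/forallP a_ge0 _].
by rewrite /epair mxE sumr_ge0 // => i _; rewrite mxE mulr_ge0.
Qed.

End Simplex.

Lemma exists_annihilator (R : realFieldType) (s1 s2 : R) :
  exists c1 c2 : R, (c1 != 0) || (c2 != 0) /\ c1 * s1 + c2 * s2 = 0.
Proof.
have [s1_0|s1_nz] := eqVneq s1 0.
  by exists 1, 0; rewrite oner_neq0 s1_0; split=> //; ring.
by exists s2, (- s1); rewrite oppr_eq0 s1_nz orbT; split=> //; ring.
Qed.

Lemma solution_omega0 (R : realFieldType) (k n : nat)
    (DJ : 'cV[R]_n -> 'M[R]_(k, n)) (eps : 'cV[R]_k) (u : 'cV[R]_n)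
    (a : 'cV[R]_k) :
  varphi_is DJ eps u 0 -> is_solution DJ eps u a -> omega DJ eps u a = 0.
Proof.
move=> [[b bS omega_b] omega_ge0] [aS a_min].
by apply/eqP; rewrite eq_le omega_ge0 // andbT -omega_b a_min.
Qed.

Theorem mainTheorem6 (R : realFieldType) (k n : nat)
    (DJ : 'cV[R]_n -> 'M[R]_(k, n))
    (eps : 'cV[R]_k) (heps : forall i, 0 <= eps i ord0)
    (u : 'cV[R]_n) (a1 a2 : 'cV[R]_k) :
  varphi_is DJ eps u 0 ->
  is_solution DJ eps u a1 -> is_solution DJ eps u a2 -> a1 != a2 ->
  (forall c1 c2 : R, omega DJ eps u (c1 *: a1 + c2 *: a2) = 0) /\
  (exists c1 c2 : R, c1 *: a1 + c2 *: a2 != 0 /\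
                     (DJ u)^T *m (c1 *: a1 + c2 *: a2) = 0).
Proof.
move=> phi0 sol1 sol2 a12.
have omegaE a : omega DJ eps u a = bform (DJ u) eps a a by [].
have [[a1S _] [a2S _]] := (sol1, sol2).
have q1 : bform (DJ u) eps a1 a1 = 0 by rewrite -omegaE solution_omega0.
have q2 : bform (DJ u) eps a2 a2 = 0 by rewrite -omegaE solution_omega0.
have q12_ge0 : 0 <= bform (DJ u) eps a1 a2.
  have half : 0 <= (2^-1 : R) <= 1 by apply/andP; split; lra.
  have := phi0.2 _ (simplex_convex half a1S a2S).
  rewrite omegaE bform_span q1 q2 !mulr0 addr0 add0r pmulr_rge0 //; lra.
have q12 := cross_term_eq0 q1 q2 q12_ge0
  (epair_simplex_ge0 heps a1S) (epair_simplex_ge0 heps a2S).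
have omega_span c1 c2 : omega DJ eps u (c1 *: a1 + c2 *: a2) = 0.
  by rewrite omegaE bform_span q1 q2 q12 !mulr0 !addr0.
split=> //.
have [c1 [c2 [c_nz c_orth]]] := exists_annihilator (epair eps a1) (epair eps a2).
exists c1, c2; split; first exact: simplex_indep.
apply: bform_orth_eq0; last exact: omega_span.
by rewrite epairD.
Qed.
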